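(* Let $k\ge 1$ be an integer and let $G=K_{n_1,n_2,\dots,n_p}$ ($p\ge 2$) be a complete $p$-partite graph such that $|\{i : n_i\ge k\}|\ge 2$. Then $\Gamma_{\times k,t}(G)=2k$.
   Context: A set $S\subseteq V(G)$ is a $k$-tuple total dominating set ($k$TDS) of a graph $G$ with $\delta(G)\ge k$ if $|N_G(x)\cap S|\ge k$ for every $x\in V(G)$. The upper $k$-tuple total domination number $\Gamma_{\times k,t}(G)$ is the maximum cardinality of a minimal (with respect to inclusion) $k$TDS of $G$. $K_{n_1,\dots,n_p}$ denotes the complete $p$-partite graph with parts of sizes $n_1,\dots,n_p$. *)

From mathcomp Require Import all_boot.
Set Implicit Arguments. Unset Strict Implicit. Unset Printing Implicit Defensive.

(* A simple graph is a (symmetric, irreflexive) relation on a finite vertex type. *)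
Definition nbhd (T : finType) (G : rel T) (x : T) : {set T} := [set y | G x y].

Definition kTDS (T : finType) (G : rel T) (k : nat) (S : {set T}) : bool :=
  [forall x, k <= #|nbhd G x :&: S|].

Definition minimal_kTDS (T : finType) (G : rel T) (k : nat) (S : {set T}) : bool :=
  kTDS G k S && [forall S' : {set T}, (S' \proper S) ==> ~~ kTDS G k S'].

Definition upper_ktuple_tdom (T : finType) (G : rel T) (k : nat) : nat :=
  \max_(S : {set T} | minimal_kTDS G k S) #|S|.

Definition cmp_vertex (p : nat) (n : 'I_p -> nat) : finType :=
  {i : 'I_p & 'I_(n i)}.

Definition complete_multipartite (p : nat) (n : 'I_p -> nat) : rel (cmp_vertex n) :=
  fun u v => tag u != tag v.

From mathcomp Require Import all_boot.
From mathcomp Require Import zify.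
Set Implicit Arguments. Unset Strict Implicit.

(* In a complete multipartite graph a vertex x sees exactly the
   vertices of S outside its own part. If S is a minimal kTDS and v is in S,
   some x is left with fewer than k neighbours in S - v, so v lies outside the
   part of x and S has at most k vertices outside that part. Applying this once
   more to a vertex of S inside the part of x gives a second part with the same
   property, and the two complements cover S: hence |S| <= 2k. Conversely, k
   vertices from each of two distinct parts of size at least k form a kTDS, and
   removing any vertex v leaves the vertices of the other part with only k - 1
   neighbours, so it is minimal. *)

Section TotalDomination.
Variables (T : finType) (G : rel T) (k : nat).

Lemma kTDSPn (S : {set T}) :
  reflect (exists x, #|nbhd G x :&: S| < k) (~~ kTDS G k S).
Proof.
by apply: (iffP forallPn) => -[x] /= Hx; exists x; move: Hx; rewrite ltnNge.
Qed.

Lemma minimal_kTDS_D1 (S : {set T}) (v : T) :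
  minimal_kTDS G k S -> v \in S -> ~~ kTDS G k (S :\ v).
Proof.
case/andP=> _ /forallP minS vS.
by apply: (implyP (minS (S :\ v))); apply: properD1.
Qed.

End TotalDomination.

Section CompleteMultipartite.
Variables (p : nat) (n : 'I_p -> nat) (k : nat).
Local Notation T := (cmp_vertex n).
Local Notation G := (@complete_multipartite p n).

Definition part (i : 'I_p) : {set T} := [set y : T | tag y == i].

Lemma nbhdI_cmp (x : T) (S : {set T}) : nbhd G x :&: S = S :\: part (tag x).
Proof. by apply/setP => y; rewrite !inE /complete_multipartite eq_sym. Qed.

Lemma minimal_kTDS_cmp_out (S : {set T}) (v : T) :
  minimal_kTDS G k S -> v \in S ->
  exists2 x : T, tag x != tag v & #|S :\: part (tag x)| <= k.
Proof.
move=> minS vS; have /andP[/forallP domS _] := minS.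
have /kTDSPn[x] := minimal_kTDS_D1 minS vS.
rewrite nbhdI_cmp setDDl setUC -setDDl => lt_k.
have domSx := domS x; rewrite nbhdI_cmp in domSx.
have := cardsD1 v (S :\: part (tag x)).
case: (boolP (v \in S :\: part (tag x))) => [vSx|_]; last by lia.
exists x; first by move: vSx; rewrite !inE eq_sym => /andP[].
by lia.
Qed.

Lemma cover_setD_parts (S : {set T}) (i j : 'I_p) :
  i != j -> S \subset (S :\: part i) :|: (S :\: part j).
Proof.
move=> ij; apply/subsetP => y yS; rewrite !inE yS !andbT -negb_and.
by apply: contra ij => /andP[/eqP <- /eqP <-].
Qed.

Lemma minimal_kTDS_cmp_card (S : {set T}) :
  minimal_kTDS G k S -> #|S| <= 2 * k.
Proof.
move=> minS; have [-> | [v0 v0S]] := set_0Vmem S; first by rewrite cards0.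
have [x _ outx] := minimal_kTDS_cmp_out minS v0S.
have [inx0 | [v1]] := set_0Vmem (S :&: part (tag x)).
  rewrite -(cardsID (part (tag x)) S) inx0 cards0; lia.
rewrite !inE => /andP[v1S /eqP tv1].
have [y + outy] := minimal_kTDS_cmp_out minS v1S; rewrite tv1 => yx.
apply: leq_trans (subset_leq_card (cover_setD_parts S yx)) _.
by have := cardsUI (S :\: part (tag y)) (S :\: part (tag x)); lia.
Qed.

Lemma part_subset_card (a : 'I_p) :
  k <= n a -> exists2 A : {set T}, A \subset part a & #|A| = k.
Proof.
move=> le_k_na.
exists [set Tagged (fun i => 'I_(n i)) (widen_ord le_k_na j) | j : 'I_k].
  by apply/subsetP => _ /imsetP[j _ ->]; rewrite inE.
rewrite card_imset ?card_ord // => j1 j2 e.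
exact/val_inj/(congr1 val (eq_from_Tagged e)).
Qed.

Lemma part_disjoint (S1 S2 : {set T}) (i j : 'I_p) :
  i != j -> S1 \subset part i -> S2 \subset part j -> [disjoint S1 & S2].
Proof.
move=> ij sS1 sS2; rewrite -setI_eq0; apply/eqP/setP => y; rewrite inE in_set0.
apply/negP => /andP[/(subsetP sS1) + /(subsetP sS2)]; rewrite !inE.
by move=> /eqP -> /eqP ij'; rewrite ij' eqxx in ij.
Qed.

Lemma subset_nbhdI_cmp (x : T) (S C : {set T}) (i : 'I_p) :
  i != tag x -> C \subset part i -> C \subset S -> C \subset nbhd G x :&: S.
Proof.
move=> ix sCi sCS; apply/subsetP => y yC; rewrite nbhdI_cmp inE (subsetP sCS) //.
by have := subsetP sCi y yC; rewrite !inE andbT => /eqP ->.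
Qed.

Lemma nbhdI_cmp_subset (x : T) (b : 'I_p) (S B C : {set T}) :
  B \subset part b -> x \in part b -> S \subset C :|: B ->
  nbhd G x :&: S \subset C.
Proof.
move=> sBb xb sSCB; apply/subsetP => y; rewrite nbhdI_cmp !inE.
case/andP=> ty /(subsetP sSCB); rewrite inE => /orP[//|/(subsetP sBb)].
rewrite inE in xb; rewrite inE => /eqP tyb.
by rewrite tyb (eqP xb) eqxx in ty.
Qed.

Section TwoParts.
Variables (a b : 'I_p) (A B : {set T}).
Hypotheses (ab : a != b) (sAa : A \subset part a) (sBb : B \subset part b).
Hypotheses (cardA : #|A| = k) (cardB : #|B| = k).

Lemma card_two_parts : #|A :|: B| = 2 * k.
Proof.
have /eqP AB0 : A :&: B == set0 by rewrite setI_eq0 (part_disjoint ab sAa sBb).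
by rewrite cardsU AB0 cards0 cardA cardB; lia.
Qed.

Lemma kTDS_two_parts : kTDS G k (A :|: B).
Proof.
apply/forallP => x; have [tx | txa] := eqVneq (tag x) a.
  rewrite -cardB subset_leq_card // (subset_nbhdI_cmp _ sBb) ?subsetUr //.
  by rewrite tx eq_sym.
by rewrite -cardA subset_leq_card // (subset_nbhdI_cmp _ sAa) ?subsetUl // eq_sym.
Qed.

End TwoParts.

Lemma minimal_kTDS_two_parts (a b : 'I_p) (A B : {set T}) :
  a != b -> 0 < k -> A \subset part a -> B \subset part b ->
  #|A| = k -> #|B| = k -> minimal_kTDS G k (A :|: B).
Proof.
move=> ab k_gt0 sAa sBb cardA cardB.
rewrite /minimal_kTDS (kTDS_two_parts ab sAa sBb cardA cardB) /=.
apply/forallP => S; apply/implyP => /properP[sS [v vAB vS]].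
have {sS vS} sSv : S \subset (A :|: B) :\ v by rewrite subsetD1 sS vS.
wlog vA : a b A B ab sAa sBb cardA cardB vAB sSv / v \in A.
  move=> wlog_vA; case/setUP: (vAB) => [vA|vB]; first exact: (wlog_vA a b A B).
  rewrite setUC in vAB sSv; apply: (wlog_vA b a B A) => //.
  by rewrite eq_sym.
have [x xB] : exists x, x \in B.
  by apply/set0Pn; apply: contraTneq k_gt0 => B0; rewrite -cardB B0 cards0.
have sSAB : S \subset (A :\ v) :|: B.
  by apply: subset_trans sSv _; rewrite setDUl setUS // subD1set.
apply/kTDSPn; exists x.
apply: leq_ltn_trans (subset_leq_card (nbhdI_cmp_subset sBb _ sSAB)) _.
  by rewrite (subsetP sBb).
by move: cardA; rewrite (cardsD1 v) vA; lia.
Qed.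

End CompleteMultipartite.

Theorem mainTheorem4 (k p : nat) (n : 'I_p -> nat) :
  1 <= k -> 2 <= p ->
  2 <= #|[set i : 'I_p | k <= n i]| ->
  upper_ktuple_tdom (@complete_multipartite p n) k = 2 * k.
Proof.
move=> k_gt0 _ /card_gt1P[a [b [+ + ab]]]; rewrite !inE => le_k_na le_k_nb.
have [A sAa cardA] := part_subset_card le_k_na.
have [B sBb cardB] := part_subset_card le_k_nb.
apply/eqP; rewrite eqn_leq; apply/andP; split.
  by apply/bigmax_leqP => S; apply: minimal_kTDS_cmp_card.
rewrite -(card_two_parts ab sAa sBb cardA cardB).
apply: leq_bigmax_cond.
exact: minimal_kTDS_two_parts ab k_gt0 sAa sBb cardA cardB.
Qed.
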